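(* Let $(M,g,S)$ be as in the context, $p\in M$, and let $u\in T_pM$ be such that $\{u,Su,S^2u,S^3u\}$ is an orthonormal basis of $T_pM$ with respect to $g$. Give each $v\in T_pM$ the coordinates $(x,y,z,t)$ defined by $v=xu+ySu+zS^2u+tS^3u$, and define new coordinates $(x',y',z',t')$ by $x=\frac12(x'-y'+z'-t')$, $y=\frac{\sqrt2}{2}(-y'+t')$, $z=-\frac12(x'+y'+z'+t')$, $t=\frac{\sqrt2}{2}(-x'+z')$. For $a\in\mathbb R$, the hyper-sphere $s=\{v\in T_pM:\tilde g(v,v)=a\}$ has, in the coordinates $(x',y',z',t')$, the equation $$x'^2+y'^2-z'^2-t'^2=\frac{a}{\sqrt2}.$$
   Context: $M$ is a 4-dimensional differentiable manifold with a positive definite metric $g$ and a tensor field $S$ of type $(1,1)$ whose components in some local coordinate system form the matrix with rows $(0,1,0,0)$, $(0,0,1,0)$, $(0,0,0,1)$, $(-1,0,0,0)$; hence $S^4=-\mathrm{id}$. It is assumed that $g(Su,Sv)=g(u,v)$ for all vector fields $u,v$. The associated metric is $\tilde g(u,v)=g(u,Sv)+g(Su,v)$. *)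

From HB Require Import structures.
From mathcomp Require Import all_boot all_order all_algebra.
From mathcomp Require Import reals.
Set Implicit Arguments. Unset Strict Implicit. Unset Printing Implicit Defensive.
Import Order.TTheory GRing.Theory Num.Theory.
Local Open Scope ring_scope.

(* The tangent space T_pM is modelled as a real vector space V. *)

Definition bilinear_form (R : realType) (V : lmodType R) (g : V -> V -> R) : Prop :=
  (forall (a : R) (u v w : V), g (a *: u + v) w = a * g u w + g v w) /\
  (forall (a : R) (u v w : V), g w (a *: u + v) = a * g w u + g w v).

Definition sym_form (R : realType) (V : lmodType R) (g : V -> V -> R) : Prop :=
  forall u v : V, g u v = g v u.

Definition positive_definite (R : realType) (V : lmodType R) (g : V -> V -> R) : Prop :=
  forall v : V, v != 0 -> 0 < g v v.

(* S is a (1,1)-tensor at p, i.e. an R-linear endomorphism of V *)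
Definition linear_endo (R : realType) (V : lmodType R) (S : V -> V) : Prop :=
  forall (a : R) (u v : V), S (a *: u + v) = a *: S u + S v.

Definition assoc_metric (R : realType) (V : lmodType R) (g : V -> V -> R) (S : V -> V)
  (u v : V) : R := g u (S v) + g (S u) v.

Definition orthonormal_S_basis (R : realType) (V : lmodType R) (g : V -> V -> R)
  (S : V -> V) (u : V) : Prop :=
  (forall i j : 'I_4, g (iter i S u) (iter j S u) = (i == j)%:R) /\
  (forall v : V, exists x y z t : R,
      v = x *: u + y *: S u + z *: S (S u) + t *: S (S (S u))).

(* The endomorphism S shifts the coordinates of v = x u + y Su + z S^2u + t S^3u
   to (-t, x, y, z), so in the orthonormal basis {S^i u} the quadratic form
   g~(v, v) = g(v, Sv) + g(Sv, v) equals 2 (xy + yz + zt - tx).  Under the given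
   change of coordinates every monomial of this form carries exactly one factor
   sqrt 2 / 2, and the form becomes sqrt 2 (x'^2 + y'^2 - z'^2 - t'^2). *)
From HB Require Import structures.
From mathcomp Require Import all_boot all_order all_algebra.
From mathcomp Require Import reals.
From mathcomp Require Import ring.
Set Implicit Arguments. Unset Strict Implicit. Unset Printing Implicit Defensive.
Import Order.TTheory GRing.Theory Num.Theory.
Local Open Scope ring_scope.

Section BilinearForm.
Variables (R : realType) (V : lmodType R) (g : V -> V -> R).
Hypothesis g_bil : bilinear_form g.

Lemma bilinear_formDl (v1 v2 w : V) : g (v1 + v2) w = g v1 w + g v2 w.
Proof. by have := g_bil.1 1 v1 v2 w; rewrite scale1r mul1r. Qed.

Lemma bilinear_formDr (v1 v2 w : V) : g w (v1 + v2) = g w v1 + g w v2.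
Proof. by have := g_bil.2 1 v1 v2 w; rewrite scale1r mul1r. Qed.

Lemma bilinear_form0l (w : V) : g 0 w = 0.
Proof. by apply/(addrI (g 0 w)); rewrite -bilinear_formDl !addr0. Qed.

Lemma bilinear_form0r (w : V) : g w 0 = 0.
Proof. by apply/(addrI (g w 0)); rewrite -bilinear_formDr !addr0. Qed.

Lemma bilinear_formZl (c : R) (v w : V) : g (c *: v) w = c * g v w.
Proof. by have := g_bil.1 c v 0 w; rewrite !addr0 bilinear_form0l addr0. Qed.

Lemma bilinear_formZr (c : R) (v w : V) : g w (c *: v) = c * g w v.
Proof. by have := g_bil.2 c v 0 w; rewrite !addr0 bilinear_form0r addr0. Qed.

Lemma bilinear_form_suml (I : Type) (r : seq I) (P : pred I) (F : I -> V) (w : V) :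
  g (\sum_(i <- r | P i) F i) w = \sum_(i <- r | P i) g (F i) w.
Proof.
exact: (big_morph (g^~ w) (fun v1 v2 => bilinear_formDl v1 v2 w) (bilinear_form0l w)).
Qed.

Lemma bilinear_form_sumr (I : Type) (r : seq I) (P : pred I) (F : I -> V) (w : V) :
  g w (\sum_(i <- r | P i) F i) = \sum_(i <- r | P i) g w (F i).
Proof.
exact: (big_morph (g w) (fun v1 v2 => bilinear_formDr v1 v2 w) (bilinear_form0r w)).
Qed.

Lemma bilinear_form_orthonormal n (e : 'I_n -> V) (a b : 'I_n -> R) :
  (forall i j, g (e i) (e j) = (i == j)%:R) ->
  g (\sum_i a i *: e i) (\sum_j b j *: e j) = \sum_i a i * b i.
Proof.
move=> e_orth; rewrite bilinear_form_suml; apply: eq_bigr => i _.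
rewrite bilinear_formZl bilinear_form_sumr (bigD1 i) //= big1 => [|j ji].
  by rewrite addr0 bilinear_formZr e_orth eqxx mulr1.
by rewrite bilinear_formZr e_orth eq_sym (negbTE ji) mulr0.
Qed.

End BilinearForm.

Section LinearEndo.
Variables (R : realType) (V : lmodType R) (S : V -> V).
Hypothesis S_lin : linear_endo S.

Lemma linear_endoD (v w : V) : S (v + w) = S v + S w.
Proof. by have := S_lin 1 v w; rewrite !scale1r. Qed.

Lemma linear_endo0 : S 0 = 0.
Proof. by apply/(addrI (S 0)); rewrite -linear_endoD !addr0. Qed.

Lemma linear_endoZ (c : R) (v : V) : S (c *: v) = c *: S v.
Proof. by have := S_lin c v 0; rewrite !addr0 linear_endo0 addr0. Qed.

End LinearEndo.

Section OrthonormalOrbit.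
Variables (R : realType) (V : lmodType R) (g : V -> V -> R) (S : V -> V) (u : V).
Hypotheses (g_bil : bilinear_form g) (S_lin : linear_endo S).
Hypothesis S4 : forall v, S (S (S (S v))) = - v.
Hypothesis u_orth : forall i j : 'I_4, g (iter i S u) (iter j S u) = (i == j)%:R.

Definition orbit_comb (x y z t : R) : V :=
  x *: u + y *: S u + z *: S (S u) + t *: S (S (S u)).

Lemma orbit_combE (x y z t : R) :
  orbit_comb x y z t = \sum_(i < 4) [:: x; y; z; t]`_i *: iter i S u.
Proof. by rewrite !big_ord_recr big_ord0 /= add0r. Qed.

Lemma S_orbit_comb (x y z t : R) : S (orbit_comb x y z t) = orbit_comb (- t) x y z.
Proof.
rewrite /orbit_comb !(linear_endoD S_lin, linear_endoZ S_lin) S4 scalerN -scaleNr.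
by rewrite addrC !addrA.
Qed.

Lemma orbit_comb_form (x y z t x1 y1 z1 t1 : R) :
  g (orbit_comb x y z t) (orbit_comb x1 y1 z1 t1)
  = x * x1 + y * y1 + z * z1 + t * t1.
Proof.
rewrite !orbit_combE bilinear_form_orthonormal //.
by rewrite !big_ord_recr big_ord0 /= add0r.
Qed.

Lemma assoc_metric_orbit_comb (x y z t : R) :
  assoc_metric g S (orbit_comb x y z t) (orbit_comb x y z t)
  = 2 * (x * y + y * z + z * t - t * x).
Proof. by rewrite /assoc_metric S_orbit_comb !orbit_comb_form; ring. Qed.

End OrthonormalOrbit.

(* The identity is linear in r, so it holds without using r ^+ 2 = 2. *)
Lemma skew_form_diagonalized (R : numFieldType) (r x' y' z' t' : R) :
  let x := 2^-1 * (x' - y' + z' - t') in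
  let y := r / 2 * (- y' + t') in
  let z := - (2^-1 * (x' + y' + z' + t')) in
  let t := r / 2 * (- x' + z') in
  2 * (x * y + y * z + z * t - t * x)
  = r * (x' ^+ 2 + y' ^+ 2 - z' ^+ 2 - t' ^+ 2).
Proof. by rewrite /=; field. Qed.

Theorem theorem3p1 (R : realType) (V : lmodType R) (g : V -> V -> R) (S : V -> V)
  (hg_bil : bilinear_form g) (hg_sym : sym_form g) (hg_pos : positive_definite g)
  (hS_lin : linear_endo S) (hS4 : forall v : V, S (S (S (S v))) = - v)
  (hS_iso : forall u v : V, g (S u) (S v) = g u v)
  (u : V) (hu : orthonormal_S_basis g S u) (a : R) :
  forall (v : V) (x y z t x' y' z' t' : R),
    v = x *: u + y *: S u + z *: S (S u) + t *: S (S (S u)) ->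
    x = 2^-1 * (x' - y' + z' - t') ->
    y = Num.sqrt 2 / 2 * (- y' + t') ->
    z = - (2^-1 * (x' + y' + z' + t')) ->
    t = Num.sqrt 2 / 2 * (- x' + z') ->
    (assoc_metric g S v v = a <->
       x' ^+ 2 + y' ^+ 2 - z' ^+ 2 - t' ^+ 2 = a / Num.sqrt 2).
Proof.
move=> v x y z t x' y' z' t' -> -> -> -> ->.
rewrite -/(orbit_comb S u _ _ _ _).
rewrite (assoc_metric_orbit_comb hg_bil hS_lin hS4 hu.1) skew_form_diagonalized.
have sqrt2_neq0 : Num.sqrt (2 : R) != 0 by rewrite gt_eqF // sqrtr_gt0 ltr0n.
by split=> [<- | ->]; rewrite mulrC ?mulKf ?divfK.
Qed.
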